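(* Let $G_1=(V_1,E_1)$ be a finite connected graph with $n=|V_1|\ge 2$, let $u\in V_1$, and let $G$ be the graph obtained from $G_1$ by adding one new vertex $v$ and the single edge $\{u,v\}$. Let $D_1$, $D_G$ be the distance matrices of $G_1$, $G$. Assume: (C1) $2+\frac{k_1}{n}\neq 0$; (C2) $D_1$ is invertible; (C3) $k_u:=K_{G_1}(u)\neq 0$, where $K_{G_1}=nD_1^{-1}\mathbf{1}_n$ is the Steinerberger curvature of $G_1$ and $k_1=\sum_{x\in V_1}K_{G_1}(x)$ is its total curvature. Then $D_G$ is invertible and the Steinerberger curvature $K_G=(n+1)D_G^{-1}\mathbf{1}_{n+1}$ of $G$ satisfies $$K_G(x)=\alpha\,K_{G_1}(x)\quad\text{for all }x\in V_1\setminus\{u\},\qquad \alpha=\frac{2(n+1)}{2n+k_1},$$ $$K_G(u)=\gamma\,k_u,\quad \gamma=\Big(1-\frac{k_1}{2k_u}\Big)\alpha,\qquad K_G(v)=\frac{(n+1)k_1}{2n+k_1}.$$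
   Context: All graphs are finite, simple, connected and undirected, with the combinatorial shortest-path distance $d$. For $G=(V,E)$ with $V=\{v_1,\dots,v_n\}$, let $D=(d(v_i,v_j))_{i,j=1}^n$ be its distance matrix and $\mathbf{1}_n\in\mathbb{R}^n$ the all-ones column vector. The Steinerberger curvature $K\in\mathbb{R}^n$ (written $K_i$ or $K(v_i)$) is defined as follows: if $DK=n\mathbf{1}_n$ has a unique solution, $K$ is that solution; if it has several solutions, $K$ is a solution for which $\min_i K_i$ is maximal; if it has no solution, $K=nD^\dagger\mathbf{1}_n$ with $D^\dagger$ the Moore–Penrose pseudoinverse. The total curvature of a vertex subset $W$ is $K(W)=\sum_{w\in W}K(w)$. *)

From HB Require Import structures.
From mathcomp Require Import all_boot all_order all_algebra.
Set Implicit Arguments. Unset Strict Implicit. Unset Printing Implicit Defensive.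
Import Order.TTheory GRing.Theory Num.Theory.
Local Open Scope ring_scope.

(* A graph on vertex set 'I_n is an edge relation e : rel 'I_n; it is a finite
   simple undirected connected graph when e is symmetric, irreflexive and
   connect e relates every pair of vertices. *)

Fixpoint within (n : nat) (e : rel 'I_n) (k : nat) (x y : 'I_n) : bool :=
  match k with
  | 0 => x == y
  | k'.+1 => within e k' x y || [exists z, within e k' x z && e z y]
  end.

(* Combinatorial shortest-path distance: the least k with y within k steps of x
   (for a connected graph on n vertices such k < n exists). *)
Definition dist (n : nat) (e : rel 'I_n) (x y : 'I_n) : nat :=
  find (fun k => within e k x y) (iota 0 n).

Definition distmx (R : ringType) (n : nat) (e : rel 'I_n) : 'M[R]_n :=
  \matrix_(i, j) (dist e i j)%:R.

(* Steinerberger curvature in the case of an invertible distance matrix: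
   K = n D^{-1} 1_n (the unique solution of D K = n 1_n). *)
Definition curvature (R : fieldType) (n : nat) (e : rel 'I_n) : 'cV[R]_n :=
  n%:R *: (invmx (distmx R e) *m const_mx 1).

(* Graph on 'I_n.+1 obtained by adding a new vertex v := ord_max and the single
   edge {u, v}; old vertex x is  lift ord_max x. *)
Definition add_leaf (n : nat) (e : rel 'I_n) (u : 'I_n) : rel 'I_n.+1 :=
  fun a b =>
    match unlift ord_max a, unlift ord_max b with
    | Some x, Some y => e x y
    | Some x, None => x == u
    | None, Some y => y == u
    | None, None => false
    end.

From HB Require Import structures.
From mathcomp Require Import all_boot all_order all_algebra.
From mathcomp Require Import ring.
Import Order.TTheory GRing.Theory Num.Theory.
Set Implicit Arguments. Unset Strict Implicit. Unset Printing Implicit Defensive.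

(* With D := D_1 and w := D^-1 1 (so K_{G_1} = n w and s := sum w = k_1 / n),
   the distance matrix of G is D bordered by the column and row of u shifted
   by 1, with a 0 corner.  Trying y := a w - b e_u on V_1 and y_v := b, the
   rows of V_1 in D_G y = 1 reduce to a + b = 1 and the row of v to
   a (1 + s) - b = 1 (using D u u = 0), whence a = 2/(2+s), b = s/(2+s).  The
   same two equations with right-hand side 0 show that D_G has trivial kernel
   as soon as 2 + s <> 0. *)

Lemma within_refl n (e : rel 'I_n) k x : within e k x x.
Proof. by elim: k => [|k IH] /=; rewrite ?eqxx ?IH. Qed.

Lemma within_pathP n (e : rel 'I_n) k x y : within e k x y <->
  exists p : seq 'I_n, [/\ size p <= k, path e x p & last x p = y].
Proof.
elim: k y => [|k IH] y /=.
  split; first by move/eqP<-; exists [::].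
  by case=> -[|z p] [] //= _ _ ->.
split.
  case/orP => [/IH [p [sp pp lp]]|/existsP [z /andP [/IH [p [sp pp lp]] ezy]]].
    by exists p; split=> //; apply: leqW.
  exists (rcons p y); split.
  - by rewrite size_rcons.
  - by rewrite rcons_path pp lp.
  - by rewrite last_rcons.
case=> p [sp pp lp].
case/lastP: p sp pp lp => [|q z] sp pp lp.
  by apply/orP; left; apply/IH; exists [::].
apply/orP; right; apply/existsP; exists (last x q).
rewrite size_rcons in sp; rewrite rcons_path in pp; case/andP: pp => pq ez.
rewrite last_rcons in lp; subst z.
by apply/andP; split => //; apply/IH; exists q.
Qed.

Lemma connect_within_lt n (e : rel 'I_n) x y : connect e x y ->
  exists2 k, k < n & within e k x y.
Proof.
move/connectP=> [p pp ->]; case/shortenP: pp => p' pp' up' _.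
exists (size p').
  have /card_uniqP card_p' := up'; have := max_card (mem (x :: p')).
  by rewrite card_p' card_ord.
by apply/within_pathP; exists p'.
Qed.

Lemma existsS_lift n (P : pred 'I_n.+1) :
  [exists z, P z] = [exists z : 'I_n, P (lift ord_max z)] || P ord_max.
Proof.
apply/existsP/orP.
  case=> z; case: (unliftP ord_max z) => [z'|] -> Pz; last by right.
  by left; apply/existsP; exists z'.
by case=> [/existsP [z Pz]|Pm]; [exists (lift ord_max z) | exists ord_max].
Qed.

Lemma dist_refl n (e : rel 'I_n) x : dist e x x = 0.
Proof. by rewrite /dist; case: n e x => [|n] e [] //= *; rewrite eqxx. Qed.

Section AddLeaf.
Variables (n : nat) (e : rel 'I_n) (u : 'I_n).
Local Notation eG := (add_leaf e u).

Lemma add_leaf_lift x y : eG (lift ord_max x) (lift ord_max y) = e x y.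
Proof. by rewrite /add_leaf !liftK. Qed.

Lemma add_leaf_lift_max x : eG (lift ord_max x) ord_max = (x == u).
Proof. by rewrite /add_leaf liftK unlift_none. Qed.

Lemma add_leaf_max_lift y : eG ord_max (lift ord_max y) = (y == u).
Proof. by rewrite /add_leaf liftK unlift_none. Qed.

Lemma add_leaf_max : eG ord_max ord_max = false.
Proof. by rewrite /add_leaf unlift_none. Qed.

Lemma within_add_leaf k :
  [/\ forall x y, within eG k (lift ord_max x) (lift ord_max y) = within e k x y,
      forall x, within eG k (lift ord_max x) ord_max = (0 < k) && within e k.-1 x u
    & forall y, within eG k ord_max (lift ord_max y) = (0 < k) && within e k.-1 u y].
Proof.
elim: k => [|k [IHll IHlm IHml]].
  split => /=.
  - by move=> x y; rewrite (inj_eq lift_inj).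
  - by move=> x; rewrite eq_sym (negbTE (neq_lift _ _)).
  - by move=> y; rewrite (negbTE (neq_lift _ _)).
split => /=.
- move=> x y; rewrite existsS_lift IHll IHlm add_leaf_max_lift.
  under eq_existsb do rewrite IHll add_leaf_lift.
  case: (boolP ((0 < k) && within e k.-1 x u && (y == u))) => [|_]; last by rewrite !orbF.
  case: k {IHll IHlm IHml} => //= k /andP [xu /eqP ->].
  by rewrite xu orbT.
- move=> x; rewrite existsS_lift IHlm add_leaf_max andbF orbF.
  under eq_existsb do rewrite IHll add_leaf_lift_max.
  have -> : [exists z, within e k x z && (z == u)] = within e k x u.
    by apply/existsP/idP => [[z /andP [xz /eqP <-]] //|xu]; exists u; rewrite xu eqxx.
  by case: k {IHll IHlm IHml} => //= k; case: (within e k x u) => //= ->.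
- move=> y; rewrite existsS_lift IHml within_refl add_leaf_max_lift /=.
  under eq_existsb do rewrite IHml add_leaf_lift.
  case: k {IHll IHlm IHml} => [|k] /=.
    have -> : [exists x : 'I_n, false] = false by apply/existsP => -[].
    by rewrite eq_sym.
  by case: (boolP (y == u)) => [/eqP ->|_]; rewrite ?within_refl ?orbF.
Qed.

Lemma within_add_leaf_lift k x y :
  within eG k (lift ord_max x) (lift ord_max y) = within e k x y.
Proof. by case: (within_add_leaf k). Qed.

Lemma within_add_leaf_lift_max k x :
  within eG k (lift ord_max x) ord_max = (0 < k) && within e k.-1 x u.
Proof. by case: (within_add_leaf k). Qed.

Lemma within_add_leaf_max_lift k y :
  within eG k ord_max (lift ord_max y) = (0 < k) && within e k.-1 u y.
Proof. by case: (within_add_leaf k). Qed.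

Lemma dist_add_leaf_lift x y : connect e x y ->
  dist eG (lift ord_max x) (lift ord_max y) = dist e x y.
Proof.
move=> /connect_within_lt [k k_lt_n xky].
rewrite /dist (eq_find (fun k => within_add_leaf_lift k x y)) -addn1 iotaD find_cat.
suff -> : has (fun k => within e k x y) (iota 0 n) by [].
by apply/hasP; exists k; rewrite // mem_iota.
Qed.

Lemma dist_add_leaf_lift_max x : dist eG (lift ord_max x) ord_max = (dist e x u).+1.
Proof.
rewrite /dist (eq_find (within_add_leaf_lift_max^~ x)) /=.
by rewrite (iotaDl 1 0) find_map.
Qed.

Lemma dist_add_leaf_max_lift y : dist eG ord_max (lift ord_max y) = (dist e u y).+1.
Proof.
rewrite /dist (eq_find (within_add_leaf_max_lift^~ y)) /=.
by rewrite (iotaDl 1 0) find_map.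
Qed.

End AddLeaf.

Local Open Scope ring_scope.

Lemma big_ord_recr_lift (R : nmodType) n (F : 'I_n.+1 -> R) :
  \sum_i F i = \sum_(i < n) F (lift ord_max i) + F ord_max.
Proof.
rewrite big_ord_recr; congr (_ + _); apply: eq_bigr => i _; congr F.
by apply: val_inj; rewrite /= /bump leqNgt ltn_ord.
Qed.

Lemma sum_indicator_mul (R : pzRingType) n (u : 'I_n) (F : 'I_n -> R) :
  \sum_x (x == u)%:R * F x = F u.
Proof.
by rewrite (bigD1 u) //= eqxx mul1r big1 ?addr0 // => x /negbTE ->; rewrite mul0r.
Qed.

Section LeafMatrix.
Variables (R : pzRingType) (n : nat) (D : 'M[R]_n) (u : 'I_n).

Definition leaf_mx : 'M[R]_n.+1 := \matrix_(i, j)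
  match unlift ord_max i, unlift ord_max j with
  | Some x, Some y => D x y
  | Some x, None => D x u + 1
  | None, Some y => D u y + 1
  | None, None => 0
  end.

Lemma leaf_mx_lift x y : leaf_mx (lift ord_max x) (lift ord_max y) = D x y.
Proof. by rewrite mxE !liftK. Qed.

Lemma leaf_mx_lift_max x : leaf_mx (lift ord_max x) ord_max = D x u + 1.
Proof. by rewrite mxE liftK unlift_none. Qed.

Lemma leaf_mx_max_lift y : leaf_mx ord_max (lift ord_max y) = D u y + 1.
Proof. by rewrite mxE liftK unlift_none. Qed.

Lemma leaf_mx_max : leaf_mx ord_max ord_max = 0.
Proof. by rewrite mxE unlift_none. Qed.

Lemma mulmx_leaf_lift (z : 'cV[R]_n.+1) x :
  (leaf_mx *m z) (lift ord_max x) 0 =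
  \sum_y D x y * z (lift ord_max y) 0 + (D x u + 1) * z ord_max 0.
Proof.
rewrite mxE big_ord_recr_lift leaf_mx_lift_max.
by congr (_ + _); apply: eq_bigr => y _; rewrite leaf_mx_lift.
Qed.

Lemma mulmx_leaf_max (z : 'cV[R]_n.+1) :
  (leaf_mx *m z) ord_max 0 = \sum_y (D u y + 1) * z (lift ord_max y) 0.
Proof.
rewrite mxE big_ord_recr_lift leaf_mx_max mul0r addr0.
by apply: eq_bigr => y _; rewrite leaf_mx_max_lift.
Qed.

End LeafMatrix.

Section LeafSolution.
Variables (F : fieldType) (n : nat) (D : 'M[F]_n) (u : 'I_n).
Local Notation leaf_mx := (leaf_mx D u).

Hypotheses (D_unit : D \in unitmx) (Duu : D u u = 0).

Local Notation w := (invmx D *m const_mx 1 : 'cV[F]_n).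
Local Notation s := (\sum_i w i 0).

Let sum_D_w x : \sum_y D x y * w y 0 = 1.
Proof.
have /(congr1 (fun M : 'cV[F]_n => M x 0)) := mulKVmx D_unit (const_mx 1 : 'cV_n).
by rewrite !mxE.
Qed.

Let sum_leaf_row c :
  \sum_y (D u y + 1) * (c * ((y == u)%:R + w y 0)) = c * (2 + s).
Proof.
rewrite (eq_bigr (fun y => c * ((y == u)%:R * (D u y + 1))
    + c * (D u y * w y 0) + c * w y 0)); last by move=> y _; ring.
by rewrite !big_split /= -!mulr_sumr sum_indicator_mul sum_D_w Duu; ring.
Qed.

Hypothesis s_neq : 2 + s != 0.

Lemma leaf_mx_ker (z : 'cV[F]_n.+1) : leaf_mx *m z = 0 -> z = 0.
Proof.
move=> Dz0; set t := z ord_max 0.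
pose r : 'cV[F]_n := \col_x (z (lift ord_max x) 0 + t * ((x == u)%:R + w x 0)).
have Dr0 : D *m r = 0.
  apply/colP => x; rewrite !mxE.
  rewrite (eq_bigr (fun y => D x y * z (lift ord_max y) 0
      + t * ((y == u)%:R * D x y) + t * (D x y * w y 0))); last first.
    by move=> y _; rewrite mxE; ring.
  rewrite !big_split /= -!mulr_sumr sum_indicator_mul sum_D_w.
  have := congr1 (fun M : 'cV[F]_n.+1 => M (lift ord_max x) 0) Dz0.
  by rewrite mulmx_leaf_lift mxE -/t => row_x; rewrite -[RHS]row_x; ring.
have zE y : z (lift ord_max y) 0 = - t * ((y == u)%:R + w y 0).
  have /colP/(_ y) := mulKmx D_unit r; rewrite Dr0 mulmx0 !mxE => /eqP.
  by rewrite eq_sym addr_eq0 => /eqP ->; ring.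
have t0 : t = 0.
  have := congr1 (fun M : 'cV[F]_n.+1 => M ord_max 0) Dz0; rewrite mulmx_leaf_max mxE.
  under eq_bigr do rewrite zE; rewrite sum_leaf_row => /eqP.
  by rewrite mulf_eq0 (negbTE s_neq) orbF oppr_eq0 => /eqP.
apply/colP => i; rewrite mxE; case: (unliftP ord_max i) => [x|] ->; last exact: t0.
by rewrite zE t0; ring.
Qed.

Lemma leaf_mx_unit : leaf_mx \in unitmx.
Proof.
rewrite -unitmx_tr unitmxE unitfE; apply/negP => /det0P [v v_neq0 vD0].
have /leaf_mx_ker/(congr1 trmx) : leaf_mx *m v^T = 0.
  by rewrite -[LHS]trmxK trmx_mul trmxK vD0 trmx0.
by rewrite trmxK trmx0 => v0; rewrite v0 eqxx in v_neq0.
Qed.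

Definition leaf_sol : 'cV[F]_n.+1 := \col_i
  match unlift ord_max i with
  | Some x => 2 / (2 + s) * w x 0 - s / (2 + s) * (x == u)%:R
  | None => s / (2 + s)
  end.

Lemma leaf_solE : invmx leaf_mx *m const_mx 1 = leaf_sol.
Proof.
apply: (canLR (mulKmx leaf_mx_unit)); apply/colP => i.
rewrite mxE; case: (unliftP ord_max i) => [x|] ->.
  rewrite mulmx_leaf_lift !mxE unlift_none.
  under eq_bigr do rewrite mxE liftK.
  rewrite (eq_bigr (fun y => 2 / (2 + s) * (D x y * w y 0)
      - s / (2 + s) * ((y == u)%:R * D x y))); last by move=> y _; ring.
  by rewrite big_split /= sumrN -!mulr_sumr sum_indicator_mul sum_D_w; field.
rewrite mulmx_leaf_max.
rewrite (eq_bigr (fun y => (D u y + 1) * (2 / (2 + s) * ((y == u)%:R + w y 0))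
    - (y == u)%:R * (D u y + 1) * ((2 + s) / (2 + s)))); last first.
  by move=> y _; rewrite mxE liftK; field.
by rewrite big_split /= sumrN sum_leaf_row -mulr_suml sum_indicator_mul Duu; field.
Qed.

End LeafSolution.

Lemma distmx_add_leaf (R : nzRingType) n (e : rel 'I_n) u :
  (forall x y, connect e x y) ->
  distmx R (add_leaf e u) = leaf_mx (distmx R e) u.
Proof.
move=> conn; apply/matrixP => i j; rewrite !mxE.
case: (unliftP ord_max i) => [x|] ->; case: (unliftP ord_max j) => [y|] ->;
  rewrite ?liftK ?unlift_none.
- by rewrite dist_add_leaf_lift // mxE.
- by rewrite dist_add_leaf_lift_max mxE natr1.
- by rewrite dist_add_leaf_max_lift mxE natr1.
- by rewrite dist_refl.
Qed.

Theorem mainTheorem4 (R : realFieldType) (n : nat) (e : rel 'I_n) (u : 'I_n) :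
  (2 <= n)%N -> symmetric e -> irreflexive e -> (forall x y, connect e x y) ->
  let K1 := curvature R e in
  let k1 := \sum_(x < n) K1 x 0 in
  let ku := K1 u 0 in
  2 + k1 / n%:R != 0 ->
  distmx R e \in unitmx ->
  ku != 0 ->
  let eG := add_leaf e u in
  distmx R eG \in unitmx /\
  (let KG := curvature R eG in
   let alpha := (2 * n.+1%:R) / (2 * n%:R + k1) in
   let gamma := (1 - k1 / (2 * ku)) * alpha in
   (forall x : 'I_n, x != u -> KG (lift ord_max x) 0 = alpha * K1 x 0) /\
   KG (lift ord_max u) 0 = gamma * ku /\
   KG ord_max 0 = (n.+1%:R * k1) / (2 * n%:R + k1)).
Proof.
move=> n_ge2 _ _ conn K1 k1 ku C1 D_unit ku_neq0 eG.
set D := distmx R e; pose w : 'cV[R]_n := invmx D *m const_mx 1; pose s := \sum_i w i 0.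
have n_neq0 : n%:R != 0 :> R by rewrite pnatr_eq0 -lt0n (leq_trans _ n_ge2).
have Duu : D u u = 0 by rewrite mxE dist_refl.
have K1E x : K1 x 0 = n%:R * w x 0 by rewrite /K1 /curvature mxE.
have k1E : k1 = n%:R * s by rewrite /k1 mulr_sumr; apply: eq_bigr => x _; rewrite K1E.
have s_neq : 2 + s != 0 by rewrite -[s](mulKf n_neq0) -k1E mulrC.
have n_s_neq0 : 2 * n%:R + n%:R * s != 0 by rewrite [2 * _]mulrC -mulrDr mulf_neq0.
have wu_neq0 : w u 0 != 0 by move: ku_neq0; rewrite /ku K1E mulf_eq0 negb_or => /andP[].
have DG : distmx R eG = leaf_mx D u by exact: distmx_add_leaf.
split; first by rewrite DG leaf_mx_unit.
move=> KG alpha gamma.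
have KG_lift x :
  KG (lift ord_max x) 0 = n.+1%:R * (2 / (2 + s) * w x 0 - s / (2 + s) * (x == u)%:R).
  by rewrite /KG /curvature DG leaf_solE // mxE [leaf_sol _ _ _ _]mxE liftK.
have KG_max : KG ord_max 0 = n.+1%:R * (s / (2 + s)).
  by rewrite /KG /curvature DG leaf_solE // mxE [leaf_sol _ _ _ _]mxE unlift_none.
rewrite /gamma /alpha KG_lift KG_max /ku !K1E k1E eqxx.
split; [move=> x /negbTE x_neq_u; rewrite KG_lift K1E x_neq_u | split]; rewrite /=; field.
all: by rewrite n_s_neq0 s_neq ?wu_neq0 ?n_neq0.
Qed.
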